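(* Assume $\kappa=\kappa^{<\kappa}$ and let $x\in S_\kappa$. Every clopen, non-compact subset of $S_\kappa\setminus\{x\}$ has $S_\kappa$-type exactly $\kappa$, i.e. it is a union of $\kappa$ many clopen subsets of $S_\kappa$ but not a union of fewer than $\kappa$ many clopen subsets of $S_\kappa$.
   Context: A space is zero-dimensional if it has a base of clopen sets. For a zero-dimensional space $X$ and an open $U\subseteq X$, the ($X$-)type $\tau(U)$ is the least cardinal $\tau$ such that $U$ is a union of $\tau$ many clopen subsets of $X$. A zero-dimensional space is an $F_\kappa$-space if every open subset of type less than $\kappa$ is $C^*$-embedded (every bounded continuous real-valued function on it extends continuously to the whole space). A space is a $G_\kappa$-space if every non-empty intersection of fewer than $\kappa$ open sets has non-empty interior. A $\kappa$-Parovičenko space is a compact Hausdorff zero-dimensional $F_\kappa$- and $G_\kappa$-space without isolated points (no weight restriction is imposed). If $\kappa=\kappa^{<\kappa}$ there is, up to homeomorphism, a unique $\kappa$-Parovičenko space of weight $\kappa$; it is denoted $S_\kappa$. *)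

(* Sets are predicates X -> Prop,
   cardinals are represented by types, compared via injections. *)
From Stdlib Require Import Reals List.
Open Scope R_scope.

Definition le_card (A B : Type) : Prop :=
  exists f : A -> B, forall a1 a2, f a1 = f a2 -> a1 = a2.
Definition lt_card (A B : Type) : Prop := le_card A B /\ ~ le_card B A.

(* kappa (the cardinality of K) is infinite and kappa^{<kappa} = kappa,
   i.e. kappa^lambda <= kappa for every lambda < kappa *)
Definition infinite_card (K : Type) : Prop := le_card nat K.
Definition kappa_lt_kappa_eq (K : Type) : Prop :=
  forall L : Type, lt_card L K -> le_card (L -> K) K.

Definition is_topology {X : Type} (op : (X -> Prop) -> Prop) : Prop :=
  (forall A B : X -> Prop, (forall x, A x <-> B x) -> op A -> op B) /\
  op (fun _ => True) /\
  (forall A B, op A -> op B -> op (fun x => A x /\ B x)) /\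
  (forall (I : Type) (F : I -> X -> Prop),
      (forall i, op (F i)) -> op (fun x => exists i, F i x)).

Definition clopen {X : Type} (op : (X -> Prop) -> Prop) (A : X -> Prop) : Prop :=
  op A /\ op (fun x => ~ A x).

Definition zero_dimensional {X : Type} (op : (X -> Prop) -> Prop) : Prop :=
  forall (U : X -> Prop) (x : X), op U -> U x ->
    exists C, clopen op C /\ C x /\ forall y, C y -> U y.

Definition union_of_clopens {X : Type} (op : (X -> Prop) -> Prop)
    (I : Type) (U : X -> Prop) : Prop :=
  exists F : I -> X -> Prop,
    (forall i, clopen op (F i)) /\ forall y, U y <-> exists i, F i y.

Definition type_lt {X : Type} (op : (X -> Prop) -> Prop) (U : X -> Prop) (K : Type) : Prop :=
  exists I : Type, lt_card I K /\ union_of_clopens op I U.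

Definition type_eq {X : Type} (op : (X -> Prop) -> Prop) (U : X -> Prop) (K : Type) : Prop :=
  union_of_clopens op K U /\
  forall I : Type, lt_card I K -> ~ union_of_clopens op I U.

Definition continuous_on {X : Type} (op : (X -> Prop) -> Prop) (A : X -> Prop) (f : X -> R) : Prop :=
  forall a, A a -> forall eps, eps > 0 ->
    exists V, op V /\ V a /\ forall y, V y -> A y -> Rabs (f y - f a) < eps.

Definition C_star_embedded {X : Type} (op : (X -> Prop) -> Prop) (U : X -> Prop) : Prop :=
  forall f : X -> R,
    (exists M, forall y, U y -> Rabs (f y) <= M) ->
    continuous_on op U f ->
    exists g : X -> R, continuous_on op (fun _ => True) g /\ forall y, U y -> g y = f y.

Definition F_kappa_space {X : Type} (op : (X -> Prop) -> Prop) (K : Type) : Prop :=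
  zero_dimensional op /\
  forall U, op U -> type_lt op U K -> C_star_embedded op U.

Definition G_kappa_space {X : Type} (op : (X -> Prop) -> Prop) (K : Type) : Prop :=
  forall (I : Type) (O : I -> X -> Prop), lt_card I K -> (forall i, op (O i)) ->
    (exists y, forall i, O i y) ->
    exists V, op V /\ (exists y, V y) /\ forall y, V y -> forall i, O i y.

Definition compact_set {X : Type} (op : (X -> Prop) -> Prop) (A : X -> Prop) : Prop :=
  forall (I : Type) (F : I -> X -> Prop), (forall i, op (F i)) ->
    (forall y, A y -> exists i, F i y) ->
    exists l : list I, forall y, A y -> exists i, In i l /\ F i y.

Definition hausdorff {X : Type} (op : (X -> Prop) -> Prop) : Prop :=
  forall x y : X, x <> y -> exists U V, op U /\ op V /\ U x /\ V y /\
    forall z, ~ (U z /\ V z).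

Definition no_isolated_points {X : Type} (op : (X -> Prop) -> Prop) : Prop :=
  forall x : X, ~ op (fun y => y = x).

Definition kappa_parovicenko {X : Type} (op : (X -> Prop) -> Prop) (K : Type) : Prop :=
  compact_set op (fun _ => True) /\ hausdorff op /\ zero_dimensional op /\
  F_kappa_space op K /\ G_kappa_space op K /\ no_isolated_points op.

Definition is_base {X : Type} (op : (X -> Prop) -> Prop) (I : Type) (B : I -> X -> Prop) : Prop :=
  (forall i, op (B i)) /\
  forall U x, op U -> U x -> exists i, B i x /\ forall y, B i y -> U y.

Definition weight_eq {X : Type} (op : (X -> Prop) -> Prop) (K : Type) : Prop :=
  (exists B : K -> X -> Prop, is_base op K B) /\
  forall I : Type, lt_card I K -> ~ exists B : I -> X -> Prop, is_base op I B.

Definition sub_open {X : Type} (op : (X -> Prop) -> Prop) (Y A : X -> Prop) : Prop :=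
  exists V, op V /\ forall z, A z <-> (V z /\ Y z).
Definition sub_clopen {X : Type} (op : (X -> Prop) -> Prop) (Y A : X -> Prop) : Prop :=
  (forall z, A z -> Y z) /\ sub_open op Y A /\ sub_open op Y (fun z => Y z /\ ~ A z).

(* Upper bound.  In a zero-dimensional space with a base of size kappa every
   open set is a union of kappa clopen sets: for each basic set pick a clopen
   set between it and U, if there is one.

   Lower bound.  Suppose U = \bigcup_{i in I} C_i with |I| < kappa.
   (1) Well-order I.  After removing a finite clopen part Z of U, the indices
       j whose initial segment C_{<=j}, together with any finitely many C_i,
       fails to cover U form a set J such that U \ Z is covered by the C_j,
       j in J, and each tail U \ Z \ C_{<=j} is nonempty (tail_split).
   (2) The G_kappa property turns each tail into a nonempty open set V_j, and
       a compactness argument shows that any choice of points p_j in V_j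
       clusters at x (points_cluster_at, clustering_family).
   (3) The G_kappa property again yields clopen sets a_j, b_j inside V_j with
       every a_i disjoint from every b_j (disjoint_clopen_refinement).  By (2)
       x lies in the closure of both A = \bigcup a_j and B = \bigcup b_j,
       whereas the F_kappa property, applied to the indicator of A on the
       open set A \cup B of type < kappa, separates them (Fkappa_separation).

   The cardinal hypotheses kappa = kappa^{<kappa} and kappa infinite only
   serve to single out S_kappa; the argument uses just the kappa-Parovicenko
   properties and the weight of X. *)

From Stdlib Require Import Reals List Lra ClassicalEpsilon Classical.
From mathcomp Require ssreflect ssrfun ssrbool eqtype boolp wochoice.

Module WellOrdering.
Import ssreflect ssrfun ssrbool eqtype boolp wochoice.

Lemma well_ordering_exists (T : Type) : exists R : T -> T -> Prop,
  (forall a b, R a b \/ R b a) /\ (forall a b, R a b -> R b a -> a = b) /\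
  (forall a b c, R a b -> R b c -> R a c) /\
  (forall P : T -> Prop, (exists a, P a) -> exists m, P m /\ forall b, P b -> R m b).
Proof.
have [R wR] := well_ordering_principle ({classic T}).
have wc : wo_chain R (mem predT) by move=> A _; apply: wR.
have tot := wo_chainW wc.
have anti := wo_chain_antisymmetric wc.
have minP : forall P : T -> Prop, (exists a, P a) -> exists m, P m /\ forall b, P b -> R m b.
  move=> P [a Pa].
  have ne : nonempty (fun x : {classic T} => `[< P x >]).
    by exists a; rewrite unfold_in; apply/asboolP.
  have [z [[zA lb] _]] := wR _ ne.
  exists z; split; first by move: zA; rewrite unfold_in => /asboolP.
  by move=> b Pb; apply: lb; rewrite unfold_in; apply/asboolP.
exists (fun a b => R a b); split; [|split; [|split]].
- by move=> a b; have := tot a b isT isT => /orP.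
- by move=> a b h1 h2; apply: anti => //; rewrite h1 h2.
- move=> a b c hab hbc.
  have [m [Pm lb]] := minP (fun x => x = a \/ x = b \/ x = c) (ex_intro _ a (or_introl erefl)).
  have ha := lb a (or_introl erefl); have hb := lb b (or_intror (or_introl erefl)).
  have hc := lb c (or_intror (or_intror erefl)).
  case: Pm => [|[|]] Hm; subst m; first exact: hc.
  + by have -> : a = b by apply: anti => //; rewrite hab ha.
  + by have <- : b = c by apply: anti => //; rewrite hbc hb.
- exact: minP.
Qed.
End WellOrdering.

Lemma list_upper_bound (J : Type) (j0 : J) (R : J -> J -> Prop)
    (Rtot : forall a b, R a b \/ R b a) (Rtrans : forall a b c, R a b -> R b c -> R a c)
    (l : list J) : exists m, forall k, In k l -> R k m.
Proof.
  induction l as [|k0 l [m Hm]].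
  - exists j0. intros k [].
  - destruct (Rtot k0 m) as [Hk0m|Hmk0].
    + exists m. intros k [<-|Hk]; auto.
    + exists k0. intros k [<-|Hk]; [|exact (Rtrans _ _ _ (Hm k Hk) Hmk0)].
      destruct (Rtot k0 k0); assumption.
Qed.

Lemma lt_card_sub (I K : Type) (P : I -> Prop) : lt_card I K -> lt_card {i : I | P i} K.
Proof.
  intros [[f Hf] HnKI]. split.
  - exists (fun i => f (proj1_sig i)). intros [a Ha] [b Hb] E. simpl in E.
    apply Hf in E. subst b. f_equal. apply proof_irrelevance.
  - intros [g Hg]. apply HnKI. exists (fun k => proj1_sig (g k)). intros a b E.
    apply Hg. destruct (g a), (g b). simpl in E. subst. f_equal. apply proof_irrelevance.
Qed.

(* Given U covered by the sets C_i, let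
   Jp j say that, for every finite list F, some point of U lies outside the
   initial segment C_{<=j} and outside the C_i, i in F.  Then U is covered by
   finitely many C_i together with the C_j for which Jp j holds: below the least
   j failing Jp, every index satisfies Jp. *)
Lemma tail_split (I Y : Type) (R : I -> I -> Prop)
    (Ranti : forall a b, R a b -> R b a -> a = b)
    (Rmin : forall P : I -> Prop, (exists a, P a) -> exists m, P m /\ forall b, P b -> R m b)
    (C : I -> Y -> Prop) (U : Y -> Prop) :
  (forall y, U y -> exists i, C i y) ->
  exists (F0 : list I) (Jp : I -> Prop),
    (forall y, U y -> (exists i, In i F0 /\ C i y) \/ exists k, Jp k /\ C k y) /\
    (forall j, Jp j -> forall F : list I, exists y,
       U y /\ (forall k, R k j -> ~ C k y) /\ forall i, In i F -> ~ C i y).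
Proof.
  intros HUC.
  set (Jp := fun j => forall F : list I, exists y,
         U y /\ (forall k, R k j -> ~ C k y) /\ forall i, In i F -> ~ C i y).
  destruct (classic (forall i, Jp i)) as [Hall|Hsome].
  { exists nil, Jp. split; [|exact (fun j Hj => Hj)].
    intros y Uy. right. destruct (HUC y Uy) as [i Ci]. exists i; auto. }
  apply not_all_ex_not in Hsome.
  destruct (Rmin (fun i => ~ Jp i) Hsome) as [i0 [Hi0 Hleast]].
  apply not_all_ex_not in Hi0. destruct Hi0 as [F HF].
  assert (Hcov : forall y, U y -> (exists k, R k i0 /\ C k y) \/ exists i, In i F /\ C i y).
  { intros y Uy. apply NNPP. intro Hn. apply HF. exists y. split; [exact Uy|].
    split; intros k Hk Ck; apply Hn; [left|right]; exists k; auto. }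
  exists (i0 :: F), Jp. split; [|exact (fun j Hj => Hj)].
  intros y Uy. destruct (Hcov y Uy) as [[k [Rk Ck]]|[i [Hi Ci]]].
  - destruct (classic (Jp k)) as [Jk|nJk].
    + right. exists k; auto.
    + left. exists i0. split; [left; reflexivity|].
      replace i0 with k; [exact Ck|apply Ranti; auto].
  - left. exists i. split; [right|]; assumption.
Qed.

Section Topology.
Variables (X : Type) (op : (X -> Prop) -> Prop).
Hypothesis Htop : is_topology op.

Lemma op_ext (A B : X -> Prop) : (forall y, A y <-> B y) -> op A -> op B.
Proof. destruct Htop as [Hext _]. apply Hext. Qed.

Lemma op_True : op (fun _ => True).
Proof. destruct Htop as [_ [HT _]]. exact HT. Qed.

Lemma op_and (A B : X -> Prop) : op A -> op B -> op (fun y => A y /\ B y).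
Proof. destruct Htop as [_ [_ [Hand _]]]. apply Hand. Qed.

Lemma op_Union (I : Type) (F : I -> X -> Prop) :
  (forall i, op (F i)) -> op (fun y => exists i, F i y).
Proof. destruct Htop as [_ [_ [_ HU]]]. apply HU. Qed.

Lemma op_or (A B : X -> Prop) : op A -> op B -> op (fun y => A y \/ B y).
Proof.
  intros HA HB.
  apply (op_ext (fun y => exists b : bool, (if b then A else B) y)).
  - intro y; split.
    + intros [[|] H]; auto.
    + intros [H|H]; [exists true | exists false]; exact H.
  - apply op_Union. intros [|]; assumption.
Qed.

Lemma clopen_or (A B : X -> Prop) :
  clopen op A -> clopen op B -> clopen op (fun y => A y \/ B y).
Proof.
  intros [HA HA'] [HB HB']. split; [apply op_or; auto|].
  apply (op_ext (fun y => ~ A y /\ ~ B y)); [intro; tauto|apply op_and; auto].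
Qed.

Lemma clopen_empty : clopen op (fun _ => False).
Proof.
  split.
  - apply (op_ext (fun y => exists e : Empty_set, True)); [|apply op_Union; intros []].
    intro y; split; [intros [[] _]|intros []].
  - apply (op_ext (fun _ => True)); [intro; tauto|apply op_True].
Qed.

Lemma clopen_list (I : Type) (C : I -> X -> Prop) (l : list I) :
  (forall i, clopen op (C i)) -> clopen op (fun y => exists i, In i l /\ C i y).
Proof.
  intro HC. induction l as [|a l IH].
  - destruct clopen_empty as [Hop Hcl]. split.
    + revert Hop. apply op_ext. intro y; split; [intros []|intros [i [[] _]]].
    + revert Hcl. apply op_ext. intro y; split; [intros _ [i [[] _]]|tauto].
  - destruct (clopen_or _ _ (HC a) IH) as [Hop Hcl]. split.
    + revert Hop. apply op_ext. intro y; split.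
      * intros [H|[i [Hi H]]]; [exists a; simpl; auto | exists i; simpl; auto].
      * intros [i [[<-|Hi] H]]; [left; exact H | right; exists i; auto].
    + revert Hcl. apply op_ext. intro y; split.
      * intros H [i [[<-|Hi] H']]; apply H; [left; exact H' | right; exists i; auto].
      * intros H [H'|[i [Hi H']]]; apply H; [exists a; simpl; auto | exists i; simpl; auto].
Qed.

Lemma op_neq (x : X) : hausdorff op -> op (fun y => y <> x).
Proof.
  intro Hhaus.
  assert (Hnbhd : forall y : {y : X | y <> x},
            exists V, op V /\ V (proj1_sig y) /\ forall z, V z -> z <> x).
  { intros [y Hy]. simpl.
    destruct (Hhaus x y (fun e => Hy (eq_sym e))) as [W [V [_ [HV [Wx [Vy HWV]]]]]].
    exists V. split; [exact HV|split; [exact Vy|]]. intros z Vz ->. apply (HWV x). auto. }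
  destruct (choice _ Hnbhd) as [V HV].
  apply (op_ext (fun z => exists y, V y z)).
  - intro z; split.
    + intros [y Hy]. exact (proj2 (proj2 (HV y)) z Hy).
    + intro Hz. exists (exist _ z Hz). exact (proj1 (proj2 (HV _))).
  - apply op_Union. intro y; exact (proj1 (HV y)).
Qed.

Lemma sub_clopen_punctured (x : X) (U : X -> Prop) :
  hausdorff op -> sub_clopen op (fun y => y <> x) U ->
  op U /\ op (fun y => y <> x /\ ~ U y).
Proof.
  intros Hhaus [_ [[V [HV HVU]] [W [HW HWU]]]]. split.
  - apply (op_ext (fun y => V y /\ y <> x)); [intro y; rewrite HVU; tauto|].
    apply op_and; [exact HV|apply op_neq; exact Hhaus].
  - apply (op_ext (fun y => W y /\ y <> x)); [intro y; rewrite HWU; tauto|].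
    apply op_and; [exact HW|apply op_neq; exact Hhaus].
Qed.

Lemma sub_clopen_remove (x : X) (U Z : X -> Prop) :
  hausdorff op -> sub_clopen op (fun y => y <> x) U -> clopen op Z -> (forall y, Z y -> U y) ->
  op (fun y => y <> x /\ ~ (U y /\ ~ Z y)).
Proof.
  intros Hhaus HUcl HZ HZU.
  apply (op_ext (fun y => (y <> x /\ ~ U y) \/ Z y));
    [|apply op_or; [exact (proj2 (sub_clopen_punctured x U Hhaus HUcl))|exact (proj1 HZ)]].
  intro y. assert (Zx : Z y -> y <> x) by (intro Zy; exact (proj1 HUcl y (HZU y Zy))).
  split; [tauto|intros [nx HnY]; destruct (classic (Z y)); tauto].
Qed.

Lemma compact_closed (A : X -> Prop) :
  compact_set op (fun _ => True) -> op (fun y => ~ A y) -> compact_set op A.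
Proof.
  intros Hc HA I F HF Hcov.
  destruct (Hc (option I) (fun o => match o with Some i => F i | None => fun y => ~ A y end))
    as [l Hl].
  - intros [i|]; auto.
  - intros y _. destruct (classic (A y)) as [Ay|nAy].
    + destruct (Hcov y Ay) as [i Hi]. exists (Some i). exact Hi.
    + exists None. exact nAy.
  - exists (flat_map (fun o => match o with Some i => i :: nil | None => nil end) l).
    intros y Ay. destruct (Hl y Logic.I) as [[i|] [Hin Hy]].
    + exists i. split; [|exact Hy]. apply in_flat_map. exists (Some i). simpl; auto.
    + contradiction.
Qed.

Lemma open_union_of_clopens (K : Type) (B : K -> X -> Prop) (U : X -> Prop) :
  zero_dimensional op -> is_base op K B -> op U -> union_of_clopens op K U.
Proof.
  intros Hzd [_ HB] HU.
  assert (Hpick : forall k, exists Ck, clopen op Ck /\ (forall y, Ck y -> U y) /\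
     ((exists C, clopen op C /\ (forall y, B k y -> C y) /\ (forall y, C y -> U y)) ->
        forall y, B k y -> Ck y)).
  { intro k. destruct (classic (exists C, clopen op C /\ (forall y, B k y -> C y) /\
        (forall y, C y -> U y))) as [[C [HC [HBC HCU]]]|Hnone].
    - exists C. auto.
    - exists (fun _ => False). split; [exact clopen_empty|].
      split; [tauto|intro Hex; contradiction]. }
  destruct (choice _ Hpick) as [F HF]. exists F. split; [intro k; apply HF|].
  intro y; split.
  - intro Uy. destruct (Hzd U y HU Uy) as [C [HC [Cy HCU]]].
    destruct (HB C y (proj1 HC) Cy) as [k [Bky HkC]]. exists k.
    apply (proj2 (proj2 (HF k))); [exists C; auto | exact Bky].
  - intros [k Hk]. exact (proj1 (proj2 (HF k)) y Hk).
Qed.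

(* Compactness argument: let Y be a set such that Y together with x is closed,
   and cover Y by open sets C_j indexed by a total order.  If each p_j lies in
   Y but outside C_k for all k <= j, then every neighbourhood of x contains
   some p_j: otherwise finitely many C_k, the neighbourhood and X \ (Y + x)
   would cover X, and the p_m for an upper bound m of the finitely many k
   would lie in none of them. *)
Lemma points_cluster_at (J : Type) (j0 : J) (R : J -> J -> Prop)
    (Rtot : forall a b, R a b \/ R b a) (Rtrans : forall a b c, R a b -> R b c -> R a c)
    (Y : X -> Prop) (C : J -> X -> Prop) (x : X) (p : J -> X) :
  compact_set op (fun _ => True) -> op (fun y => y <> x /\ ~ Y y) ->
  (forall j, op (C j)) -> (forall y, Y y -> exists j, C j y) ->
  (forall j, Y (p j) /\ forall k, R k j -> ~ C k (p j)) ->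
  forall N, op N -> N x -> exists j, N (p j).
Proof.
  intros Hcomp HO HC HYC Hp N HN Nx. apply NNPP. intro Hno.
  destruct (Hcomp (option J) (fun t => match t with
             | Some k => C k
             | None => fun y => N y \/ (y <> x /\ ~ Y y) end)) as [l Hl].
  - intros [k|]; [apply HC|apply op_or; assumption].
  - intros y _. destruct (classic (y = x)) as [->|nx]; [exists None; left; exact Nx|].
    destruct (classic (Y y)) as [Yy|nY].
    + destruct (HYC y Yy) as [k Ck]. exists (Some k). exact Ck.
    + exists None. right. auto.
  - destruct (list_upper_bound J j0 R Rtot Rtrans
                (flat_map (fun t => match t with Some k => k :: nil | None => nil end) l))
      as [m Hm].
    destruct (Hp m) as [Ypm Hpm].
    destruct (Hl (p m) Logic.I) as [[k|] [Hin Hcov]].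
    + apply (Hpm k); [|exact Hcov].
      apply Hm. apply in_flat_map. exists (Some k). simpl; auto.
    + destruct Hcov as [Npm|[_ nY]]; [apply Hno; exists m; exact Npm|contradiction].
Qed.

Section Kappa.
Variable K : Type.

Lemma Gkappa_clopen (I : Type) (O : I -> X -> Prop) :
  G_kappa_space op K -> zero_dimensional op ->
  lt_card I K -> (forall i, op (O i)) -> (exists y, forall i, O i y) ->
  exists Cl, clopen op Cl /\ (exists y, Cl y) /\ forall y, Cl y -> forall i, O i y.
Proof.
  intros HG Hzd HI HO Hy.
  destruct (HG I O HI HO Hy) as [W [HW [[w Ww] HWO]]].
  destruct (Hzd W w HW Ww) as [Cl [HCl [Clw HClW]]].
  exists Cl. split; [exact HCl|]. split; [exists w; exact Clw|].
  intros y Cly. exact (HWO y (HClW y Cly)).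
Qed.

(* In a Hausdorff G_kappa-space without isolated points fewer than kappa points
   never cover a nonempty open set V: otherwise the sets V \ {p_j}, p_j <> y,
   would have an open intersection containing y and contained in {y}. *)
Lemma avoid_few_points (J : Type) (p : J -> X) (V : X -> Prop) (y : X) :
  G_kappa_space op K -> hausdorff op -> no_isolated_points op ->
  lt_card J K -> op V -> V y -> exists z, V z /\ forall j, z <> p j.
Proof.
  intros HG Hhaus Hni HJ HV Vy. apply NNPP. intro Hnone.
  assert (Hcov : forall z, V z -> exists j, z = p j).
  { intros z Vz. apply NNPP. intro Hz. apply Hnone. exists z. split; [exact Vz|].
    intros j E. apply Hz. exists j. exact E. }
  destruct (HG J (fun j z => V z /\ (p j = y \/ z <> p j))) as [W [HW [[w Ww] HWsub]]].
  - exact HJ.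
  - intro j. destruct (classic (p j = y)) as [E|E].
    + apply (op_ext V); [intro z; tauto|exact HV].
    + apply (op_ext (fun z => V z /\ z <> p j)); [intro z; tauto|].
      apply op_and; [exact HV|apply op_neq; exact Hhaus].
  - exists y. intro j. split; [exact Vy|]. destruct (classic (p j = y)); [left|right]; congruence.
  - assert (HWy : forall z, W z -> z = y).
    { intros z Wz. destruct (Hcov y Vy) as [j0 _].
      destruct (HWsub z Wz j0) as [Vz _]. destruct (Hcov z Vz) as [j ->].
      destruct (HWsub (p j) Wz j) as [_ [E|E]]; [exact E|contradiction]. }
    apply (Hni y). apply (op_ext W); [|exact HW].
    intro z; split; [apply HWy|intros ->]. rewrite <- (HWy w Ww). exact Ww.
Qed.

(* Fewer than kappa nonempty open sets V_j can be refined to nonempty clopen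
   sets a_j, b_j inside V_j with every a_i disjoint from every b_j: choose
   p_j in V_j, take a_j inside V_j avoiding all p_i, then b_j around p_j
   avoiding all a_i. *)
Lemma disjoint_clopen_refinement (J : Type) (V : J -> X -> Prop) :
  G_kappa_space op K -> zero_dimensional op -> hausdorff op -> no_isolated_points op ->
  lt_card J K -> (forall j, op (V j)) -> (forall j, exists y, V j y) ->
  exists a b : J -> X -> Prop,
    (forall j, clopen op (a j) /\ (exists y, a j y) /\ forall y, a j y -> V j y) /\
    (forall j, clopen op (b j) /\ (exists y, b j y) /\ forall y, b j y -> V j y) /\
    (forall i j y, a i y -> ~ b j y).
Proof.
  intros HG Hzd Hhaus Hni HJ HV Hne.
  destruct (choice _ Hne) as [p Hp].
  assert (Ha : forall j, exists a, clopen op a /\ (exists y, a y) /\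
                 forall y, a y -> forall i, V j y /\ y <> p i).
  { intro j.
    destruct (avoid_few_points J p (V j) (p j) HG Hhaus Hni HJ (HV j) (Hp j)) as [q [Vq Hq]].
    apply Gkappa_clopen; [exact HG|exact Hzd|exact HJ| |exists q; auto].
    intro i. apply op_and; [apply HV|apply op_neq; exact Hhaus]. }
  destruct (choice _ Ha) as [a Haf].
  assert (Hb : forall j, exists b, clopen op b /\ (exists y, b y) /\
                 forall y, b y -> forall i, V j y /\ ~ a i y).
  { intro j. apply Gkappa_clopen; [exact HG|exact Hzd|exact HJ| |].
    - intro i. apply op_and; [apply HV|exact (proj2 (proj1 (Haf i)))].
    - exists (p j). intro i. split; [apply Hp|]. intro api.
      exact (proj2 (proj2 (proj2 (Haf i)) (p j) api j) eq_refl). }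
  destruct (choice _ Hb) as [b Hbf].
  exists a, b. split; [|split].
  - intro j. destruct (Haf j) as [HC [Hn Hs]].
    split; [exact HC|split; [exact Hn|intros y ay; exact (proj1 (Hs y ay j))]].
  - intro j. destruct (Hbf j) as [HC [Hn Hs]].
    split; [exact HC|split; [exact Hn|intros y yb; exact (proj1 (Hs y yb j))]].
  - intros i j y ay yb. exact (proj2 (proj2 (proj2 (Hbf j)) y yb i) ay).
Qed.

(* In an F_kappa-space, if A and B are disjoint unions of fewer than kappa
   clopen sets, no point lies in the closure of both: the indicator of A is
   continuous on the open set A + B of type < kappa, and a continuous extension
   of it would take the values 0 and 1 near that point. *)
Lemma Fkappa_separation (J : Type) (a b : J -> X -> Prop) (x : X) :
  (forall W, op W -> type_lt op W K -> C_star_embedded op W) ->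
  lt_card J K -> (forall j, clopen op (a j)) -> (forall j, clopen op (b j)) ->
  (forall i j y, a i y -> ~ b j y) ->
  ~ (forall N, op N -> N x ->
       (exists y, N y /\ exists j, a j y) /\ (exists y, N y /\ exists j, b j y)).
Proof.
  intros HF HJ Ha Hb Hab Hclose.
  set (A := fun y => exists j, a j y).
  set (B := fun y => exists j, b j y).
  assert (HAo : op A) by (apply op_Union; intro j; exact (proj1 (Ha j))).
  assert (HBo : op B) by (apply op_Union; intro j; exact (proj1 (Hb j))).
  assert (HBA : forall y, B y -> ~ A y) by (intros y [j yb] [i ay]; exact (Hab i j y ay yb)).
  assert (HDt : type_lt op (fun y => A y \/ B y) K).
  { exists J. split; [exact HJ|]. exists (fun j y => a j y \/ b j y). split.
    - intro j. apply clopen_or; auto.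
    - intro y; unfold A, B; split.
      + intros [[j H]|[j H]]; exists j; auto.
      + intros [j [H|H]]; [left|right]; exists j; auto. }
  set (f := fun y => if excluded_middle_informative (A y) then 1 else 0).
  assert (fA : forall y, A y -> f y = 1).
  { intros y Ay. unfold f. destruct (excluded_middle_informative (A y)); tauto. }
  assert (fB : forall y, B y -> f y = 0).
  { intros y By. unfold f. destruct (excluded_middle_informative (A y)) as [Ay|]; [|reflexivity].
    exfalso. exact (HBA y By Ay). }
  destruct (HF _ (op_or _ _ HAo HBo) HDt f) as [g [Hg Hgf]].
  - exists 1. intros y [Ay|By]; [rewrite fA|rewrite fB]; auto;
      [rewrite Rabs_R1|rewrite Rabs_R0]; lra.
  - intros z Dz eps Heps. destruct (classic (A z)) as [Az|nAz].
    + exists A. split; [exact HAo|split; [exact Az|]]. intros y Ay _.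
      rewrite (fA y Ay), (fA z Az), Rminus_diag, Rabs_R0. exact Heps.
    + assert (Bz : B z) by (destruct Dz; [contradiction|assumption]).
      exists B. split; [exact HBo|split; [exact Bz|]]. intros y By _.
      rewrite (fB y By), (fB z Bz), Rminus_diag, Rabs_R0. exact Heps.
  - destruct (Hg x Logic.I (1/2)) as [N [HN [Nx HNg]]]; [lra|].
    destruct (Hclose N HN Nx) as [[y1 [Ny1 Ay1]] [y2 [Ny2 By2]]].
    pose proof (HNg y1 Ny1 Logic.I) as E1. pose proof (HNg y2 Ny2 Logic.I) as E2.
    rewrite Hgf, fA in E1 by (try left; exact Ay1).
    rewrite Hgf, fB in E2 by (try right; exact By2).
    apply Rabs_def2 in E1. apply Rabs_def2 in E2. lra.
Qed.

(* V_j is an open subset of the tail U \ Z \ C_{<=j} given by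
   tail_split. *)
Lemma clustering_family (I : Type) (C : I -> X -> Prop) (x : X) (U : X -> Prop) :
  compact_set op (fun _ => True) -> hausdorff op -> G_kappa_space op K ->
  sub_clopen op (fun y => y <> x) U -> ~ compact_set op U ->
  lt_card I K -> (forall i, clopen op (C i)) -> (forall y, U y <-> exists i, C i y) ->
  exists (J : Type) (V : J -> X -> Prop),
    lt_card J K /\ (forall j, op (V j)) /\ (forall j, exists y, V j y) /\
    forall p : J -> X, (forall j, V j (p j)) -> forall N, op N -> N x -> exists j, N (p j).
Proof.
  intros Hcomp Hhaus HG HUcl Hnc HI HC HUC.
  pose proof (proj1 (sub_clopen_punctured x U Hhaus HUcl)) as HUo.
  destruct (WellOrdering.well_ordering_exists I) as [R [Rtot [Ranti [Rtrans Rmin]]]].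
  destruct (tail_split I X R Ranti Rmin C U (fun y Uy => proj1 (HUC y) Uy))
    as [F0 [Jp [Hsplit Htail]]].
  set (Z := fun y => exists i, In i F0 /\ C i y).
  assert (HZ : clopen op Z) by (apply clopen_list; exact HC).
  assert (HZU : forall y, Z y -> U y) by (intros y [i [_ Ci]]; apply HUC; eauto).
  set (Js := {j : I | Jp j}).
  (* some index has a nonempty tail, for otherwise U = Z would be compact *)
  assert (j0 : Js).
  { apply constructive_indefinite_description.
    apply NNPP. intro Hnone. apply Hnc. apply compact_closed; [exact Hcomp|].
    apply (op_ext (fun y => ~ Z y)); [|exact (proj2 HZ)].
    intro y; split; intros HnZ Hy; apply HnZ.
    - destruct (Hsplit y Hy) as [HZy|[k [Jk _]]]; [exact HZy|].
      exfalso. apply Hnone. exists k. exact Jk.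
    - apply HZU. exact Hy. }
  assert (HV : forall j : Js, exists V, op V /\ (exists y, V y) /\
             forall y, V y -> forall k : {k : I | R k (proj1_sig j)},
               U y /\ ~ Z y /\ ~ C (proj1_sig k) y).
  { intros [j Jj]. apply (HG {k : I | R k j}); [apply lt_card_sub; exact HI| |].
    - intro k. apply op_and; [exact HUo|apply op_and; [exact (proj2 HZ)|exact (proj2 (HC _))]].
    - destruct (Htail j Jj F0) as [y [Uy [Hseg HnZ]]]. exists y. intros [k Rk].
      split; [exact Uy|split; [intros [i [Hi Ci]]; exact (HnZ i Hi Ci)|exact (Hseg k Rk)]]. }
  destruct (choice _ HV) as [V HVf].
  exists Js, V. split; [apply lt_card_sub; exact HI|]. split; [intro j; apply HVf|].
  split; [intro j; apply HVf|].
  intros p Hp.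
  apply (points_cluster_at Js j0 (fun j k => R (proj1_sig j) (proj1_sig k))
           (fun j k => Rtot _ _) (fun j k l => Rtrans _ _ _)
           (fun y => U y /\ ~ Z y) (fun k => C (proj1_sig k)) x p Hcomp).
  - exact (sub_clopen_remove x U Z Hhaus HUcl HZ HZU).
  - intro k. exact (proj1 (HC _)).
  - intros y [Uy nZ]. destruct (Hsplit y Uy) as [Zy|[k [Jk Ck]]]; [contradiction|].
    exists (exist _ k Jk). exact Ck.
  - intro j. destruct (HVf j) as [_ [_ Hs]].
    assert (Rjj : R (proj1_sig j) (proj1_sig j))
      by (destruct (Rtot (proj1_sig j) (proj1_sig j)); assumption).
    destruct (Hs (p j) (Hp j) (exist _ _ Rjj)) as [Uy [nZ _]].
    split; [split; assumption|].
    intros k Rkj. exact (proj2 (proj2 (Hs (p j) (Hp j) (exist _ (proj1_sig k) Rkj)))).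
Qed.

End Kappa.
End Topology.

Theorem lemma4p5 (K : Type) (Kinf : infinite_card K) (HK : kappa_lt_kappa_eq K)
    (X : Type) (op : (X -> Prop) -> Prop) (Htop : is_topology op)
    (Hpar : kappa_parovicenko op K) (Hw : weight_eq op K)
    (x : X) (U : X -> Prop)
    (HU : sub_clopen op (fun y => y <> x) U) (Hnc : not (compact_set op U)) :
  type_eq op U K.
Proof.
  destruct Hpar as [Hcomp [Hhaus [Hzd [[_ HF] [HG Hni]]]]].
  split.
  -
    destruct Hw as [[B HB] _].
    apply (open_union_of_clopens X op Htop K B U Hzd HB).
    exact (proj1 (sub_clopen_punctured X op Htop x U Hhaus HU)).
  -
    intros I HI [C [HC HUC]].
    destruct (clustering_family X op Htop K I C x U Hcomp Hhaus HG HU Hnc HI HC HUC)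
      as [J [V [HJ [HV [HVne Hcluster]]]]].
    destruct (disjoint_clopen_refinement X op Htop K J V HG Hzd Hhaus Hni HJ HV HVne)
      as [a [b [Ha [Hb Hab]]]].
    destruct (choice a (fun j => proj1 (proj2 (Ha j)))) as [pa Hpa].
    destruct (choice b (fun j => proj1 (proj2 (Hb j)))) as [pb Hpb].
    apply (Fkappa_separation X op Htop K J a b x HF HJ
             (fun j => proj1 (Ha j)) (fun j => proj1 (Hb j)) Hab).
    intros N HN Nx. split.
    + destruct (Hcluster pa (fun j => proj2 (proj2 (Ha j)) (pa j) (Hpa j)) N HN Nx) as [j Nj].
      exists (pa j). split; [exact Nj|exists j; exact (Hpa j)].
    + destruct (Hcluster pb (fun j => proj2 (proj2 (Hb j)) (pb j) (Hpb j)) N HN Nx) as [j Nj].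
      exists (pb j). split; [exact Nj|exists j; exact (Hpb j)].
Qed.
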